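(* Let $a,b,c\geq 1$ be integers, put $v=a+b+c+1$ and $L=\{1^a,2^b,4^c\}$, and suppose $4\leq\lfloor v/2\rfloor$. Then there exists a Hamiltonian path $H$ of $K_v$ with $\ell(H)=L$ if and only if for every divisor $d$ of $v$, the number of elements of $L$ (with multiplicity) that are multiples of $d$ does not exceed $v-d$.
   Context: $K_v$ is the complete graph on $\{0,1,\dots,v-1\}$. The length of an edge $[x,y]$ is $\ell(x,y)=\min(|x-y|,\,v-|x-y|)$, and for a subgraph $\Gamma$, $\ell(\Gamma)$ is the multiset of lengths of its edges. $\{1^a,2^b,4^c\}$ is the multiset with $a$ copies of $1$, $b$ copies of $2$, $c$ copies of $4$. (The paper phrases this as ''$\mathrm{BHR}(\{1^a,2^b,4^c\})$ holds''.) *)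

From mathcomp Require Import all_boot.
Set Implicit Arguments. Unset Strict Implicit. Unset Printing Implicit Defensive.

Definition absdiff (x y : nat) : nat := (x - y) + (y - x).

(* length of the edge [x,y] of K_v on vertex set {0,...,v-1} *)
Definition edge_len (v x y : nat) : nat := minn (absdiff x y) (v - absdiff x y).

Definition ham_path (v : nat) (p : seq nat) : Prop := perm_eq p (iota 0 v).

Definition path_lengths (v : nat) (p : seq nat) : seq nat :=
  [seq edge_len v e.1 e.2 | e <- zip p (behead p)].

Definition L124 (a b c : nat) : seq nat := nseq a 1 ++ nseq b 2 ++ nseq c 4.

(* Necessity: when d divides v, an edge whose length is a multiple of d joins two
   vertices in the same residue class mod d, so a Hamiltonian path, which visits
   all d classes, has at least d - 1 edges whose length is not a multiple of d.

   Sufficiency: if a + b >= 3 we build a Hamiltonian path of [0, v) whose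
   differences |x - y| between consecutive vertices form L; as they are at most
   4 <= v/2, they are also its edge lengths.  Start from a path on c + 4 vertices
   with differences {1,2,2,4^c} or {1,1,2,4^c} that runs through the four residue
   classes mod 4 in steps of 4, and repeatedly add a new largest vertex next to an
   end: next to the end N - 1 this creates a 1, next to the end N - 2 (after
   reversing the path) a 2.  If a = b = 1, the condition for d = 4 says that 4
   does not divide v, and an explicit path uses one edge of length v - 2 or v - 4,
   which wraps around to length 2 or 4. *)

From mathcomp Require Import all_boot zify.
Set Implicit Arguments. Unset Strict Implicit. Unset Printing Implicit Defensive.

Definition gaps (p : seq nat) : seq nat :=
  if p is x :: s then pairmap absdiff x s else [::].

Lemma absdiffC x y : absdiff x y = absdiff y x.
Proof. by rewrite /absdiff addnC. Qed.

Lemma path_lengths_cons v x s : path_lengths v (x :: s) = pairmap (edge_len v) x s.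
Proof. by elim: s x => //= y s IH x; rewrite -IH. Qed.

Lemma path_lengths_gaps v p :
  path_lengths v p = [seq minn d (v - d) | d <- gaps p].
Proof.
case: p => // x s; rewrite path_lengths_cons /=.
by elim: s x => //= y s IH x; rewrite IH.
Qed.

Lemma edge_len_dvd_eqmod v d x y : d %| v -> x < v -> y < v ->
  d %| edge_len v x y -> x = y %[mod d].
Proof.
move=> dv; wlog le_yx : x y / y <= x => [W ltx lty|ltx _].
  have [/W|/ltnW le_xy] := leqP y x; first exact.
  by rewrite /edge_len absdiffC => /(W _ _ le_xy lty ltx).
rewrite /edge_len (_ : absdiff x y = x - y); last by rewrite /absdiff; lia.
have [->|->] : minn (x - y) (v - (x - y)) = x - y \/
               minn (x - y) (v - (x - y)) = v - (x - y) by lia.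
  by move=> dxy; apply/eqP; rewrite eqn_mod_dvd.
rewrite dvdn_subr ?(leq_trans (leq_subr _ _) (ltnW ltx)) // => dxy.
by apply/eqP; rewrite eqn_mod_dvd.
Qed.

Lemma size_undup_cons (T : eqType) (x : T) s :
  size (undup (x :: s)) = (x \notin s) + size (undup s).
Proof. by rewrite /=; case: (x \in s). Qed.

(* Along a path, every edge whose length is not a multiple of [d] is needed to
   reach a new residue class mod [d]. *)
Lemma count_dvd_edges_residues v d x s : d %| v -> all (gtn v) (x :: s) ->
  count (dvdn d) (pairmap (edge_len v) x s) + size (undup [seq y %% d | y <- x :: s])
  <= (size s).+1.
Proof.
move=> dv; elim: s x => [//|y s IH] x /andP [ltx ys].
have lty : y < v by case/andP: ys.
have -> : count (dvdn d) (pairmap (edge_len v) x (y :: s))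
          = (d %| edge_len v x y) + count (dvdn d) (pairmap (edge_len v) y s) by [].
move: (IH y ys); rewrite !map_cons !size_undup_cons.
have [/(edge_len_dvd_eqmod dv ltx lty) ->|_] := boolP (d %| edge_len v x y).
  by rewrite mem_head /=; lia.
by case: (_ \notin _) => /=; lia.
Qed.

Lemma count_dvd_path_lengths v d p : 0 < v -> ham_path v p -> d %| v ->
  count (dvdn d) (path_lengths v p) <= v - d.
Proof.
move=> v_gt0 hp dv; have size_p : size p = v by rewrite (perm_size hp) size_iota.
case: p hp size_p => [|x s] hp /= size_s; first by rewrite -size_s in v_gt0.
have p_lt : all (gtn v) (x :: s) by apply/allP => y; rewrite (perm_mem hp) mem_iota.
have := count_dvd_edges_residues dv p_lt; rewrite -path_lengths_cons.
set residues := undup [seq y %% d | y <- x :: s].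
have : d <= size residues.
  suff /(uniq_leq_size (iota_uniq 0 d)) : {subset iota 0 d <= residues}.
    by rewrite size_iota.
  move=> i; rewrite mem_iota mem_undup => /andP [_ lt_id]; apply/mapP; exists i.
    by rewrite (perm_mem hp) mem_iota /= (leq_trans lt_id) // dvdn_leq.
  by rewrite modn_small.
by lia.
Qed.

Fixpoint iota4 (r n : nat) : seq nat :=
  if n is n'.+1 then r :: iota4 (r + 4) n' else [::].

Lemma size_iota4 r n : size (iota4 r n) = n.
Proof. by elim: n r => //= n IH r; rewrite IH. Qed.

Lemma iota4Dr m r n : iota4 (r + m) n = map (addn m) (iota4 r n).
Proof. by elim: n r => //= n IH r; rewrite addnAC IH addnC. Qed.

Lemma iota4S_rcons r n : iota4 r n.+1 = rcons (iota4 r n) (r + 4 * n).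
Proof.
elim: n r => [|n IH] r; first by rewrite /= addn0.
by rewrite -[iota4 r _]/(r :: iota4 (r + 4) n.+1) IH mulnS addnA.
Qed.

Lemma head_iota4 x0 r n : head x0 (iota4 r n.+1) = r. Proof. by []. Qed.

Lemma last_iota4 x0 r n : last x0 (iota4 r n.+1) = r + 4 * n.
Proof. by rewrite iota4S_rcons last_rcons. Qed.

Lemma head_rev_iota4 x0 r n : head x0 (rev (iota4 r n.+1)) = r + 4 * n.
Proof. by rewrite iota4S_rcons rev_rcons. Qed.

Lemma last_rev_iota4 x0 r n : last x0 (rev (iota4 r n.+1)) = r.
Proof. by rewrite /= rev_cons last_rcons. Qed.

Lemma head_cat (T : eqType) (x0 : T) (s t : seq T) :
  s != [::] -> head x0 (s ++ t) = head x0 s.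
Proof. by case: s. Qed.

Lemma gaps_cons x y s : gaps [:: x, y & s] = absdiff x y :: gaps (y :: s).
Proof. by []. Qed.

Lemma gaps_cat s t : s != [::] -> t != [::] ->
  gaps (s ++ t) = gaps s ++ absdiff (last 0 s) (head 0 t) :: gaps t.
Proof. by case: s => // x s _; case: t => // y t _; rewrite /= pairmap_cat. Qed.

Lemma gaps_rev p : gaps (rev p) = rev (gaps p).
Proof.
case: p => // x s; elim: s x => // y s IH x.
rewrite rev_cons -cats1 gaps_cat -?size_eq0 ?size_rev // IH gaps_cons.
by rewrite [rev (_ :: gaps _)]rev_cons -cats1 rev_cons last_rcons absdiffC.
Qed.

Lemma gaps_iota4 r n : gaps (iota4 r n.+1) = nseq n 4.
Proof.
elim: n r => // n IH r; rewrite -[iota4 r _]/(r :: iota4 (r + 4) n.+1) gaps_cons IH.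
by rewrite /absdiff addKn subnDA subnn.
Qed.

Lemma gaps_rev_iota4 r n : gaps (rev (iota4 r n.+1)) = nseq n 4.
Proof. by rewrite gaps_rev gaps_iota4 rev_nseq. Qed.

(* The residue classes mod 4 of [0, 4 k + j), listed class by class. *)
Lemma perm_iota4 k j : j < 4 ->
  perm_eq (iota4 0 (k + (0 < j)) ++ iota4 1 (k + (1 < j)) ++ iota4 2 (k + (2 < j))
             ++ iota4 3 k)
          (iota 0 (4 * k + j)).
Proof.
move=> lt_j4; elim: k => [|k IH]; first by case: j lt_j4 => [|[|[|[]]]].
rewrite (_ : 4 * k.+1 + j = 4 + (4 * k + j)); last by rewrite mulnS addnA.
rewrite iotaD [iota (0 + 4) _](iotaDl 4 0) !addSn /=.
rewrite !iota4Dr; apply/permP => P; move: (permP IH (preim (addn 4) P)).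
by do 4 rewrite /= ?count_cat ?count_map; lia.
Qed.

Definition linear_realization (N : nat) (p L : seq nat) : Prop :=
  perm_eq p (iota 0 N) /\ perm_eq (gaps p) L.

Lemma linear_realization_perm N p L L' : perm_eq L L' ->
  linear_realization N p L -> linear_realization N p L'.
Proof. by move=> hLL' [hp hL]; split=> //; apply: perm_trans hL hLL'. Qed.

Lemma linear_realization_nil N L : linear_realization N [::] L -> N = 0.
Proof. by case=> /perm_size; rewrite size_iota. Qed.

Lemma perm_iota_cons_top N p : perm_eq p (iota 0 N) -> perm_eq (N :: p) (iota 0 N.+1).
Proof.
move=> hp; rewrite -addn1 iotaD cats1 perm_sym perm_rcons perm_cons perm_sym.
exact: hp.
Qed.

Lemma linear_realization_cons_top N p L : 0 < N -> head 0 p = N.-1 ->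
  linear_realization N p L -> linear_realization N.+1 (N :: p) (1 :: L).
Proof.
case: p => [N_gt0 _ /linear_realization_nil N0|x s N_gt0 /= hx [hp hL]].
  by rewrite N0 in N_gt0.
split; first exact: perm_iota_cons_top.
by rewrite gaps_cons (_ : absdiff _ _ = 1) ?perm_cons // hx /absdiff; lia.
Qed.

Lemma linear_realization_cons_top_rev N p L : 1 < N -> last 0 p = N.-2 ->
  linear_realization N p L -> linear_realization N.+1 (N :: rev p) (2 :: L).
Proof.
case: p => [N_gt1 _ /linear_realization_nil N0|x s N_gt1 /= hl [hp hL]].
  by rewrite N0 in N_gt1.
split; first by apply: perm_iota_cons_top; rewrite perm_rev.
rewrite [x :: s]lastI rev_rcons gaps_cons -rev_rcons -lastI gaps_rev.
by rewrite (_ : absdiff _ _ = 2) ?perm_cons ?perm_rev // hl /absdiff; lia.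
Qed.

Lemma linear_realization_ones N p L n : 0 < N -> head 0 p = N.-1 ->
  linear_realization N p L ->
  exists2 q, head 0 q = (n + N).-1 & linear_realization (n + N) q (nseq n 1 ++ L).
Proof.
move=> N_gt0 hh hr; elim: n => [|n [q hq IH]]; first by exists p.
by exists ((n + N) :: q); rewrite addSn //; apply: linear_realization_cons_top => //; lia.
Qed.

Lemma linear_realization_twos N p L n : 1 < N -> head 0 p = N.-1 -> last 0 p = N.-2 ->
  linear_realization N p L ->
  exists q, [/\ head 0 q = (n + N).-1, last 0 q = (n + N).-2 &
                linear_realization (n + N) q (nseq n 2 ++ L)].
Proof.
move=> N_gt1 hh hl hr; elim: n => [|n [q [hq lq IH]]]; first by exists p.
exists ((n + N) :: rev q); rewrite addSn; split => //.
  by case: q hq {lq IH} => [|x s] /= hq; [move: hq; lia | rewrite rev_cons last_rcons].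
by apply: linear_realization_cons_top_rev => //; lia.
Qed.

Lemma decomp4 N m : 4 * m <= N -> exists k J, J < 4 /\ N = 4 * (k + m) + J.
Proof.
move=> le_mN; exists (N %/ 4 - m), (N %% 4); rewrite ltn_mod; split => //.
have := divn_eq N 4; lia.
Qed.

(* The paths below run through the residue classes mod 4 as arithmetic
   progressions of difference 4, each possibly reversed, joined by three short
   edges; which arrangement works depends on the number of vertices mod 4. *)
Ltac solve_nonempty := by rewrite -size_eq0 ?size_cat ?size_rev ?size_iota4 ?addSn.
Ltac expand_ends :=
  repeat (rewrite head_cat; last solve_nonempty);
  rewrite ?last_cat ?head_iota4 ?head_rev_iota4 ?last_iota4 ?last_rev_iota4.
Ltac expand_gaps :=
  repeat (rewrite gaps_cat; [| solve_nonempty | solve_nonempty]);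
  rewrite ?gaps_iota4 ?gaps_rev_iota4.
Ltac rewrite_small t := first
  [ rewrite (_ : t = 1); last by rewrite /absdiff; lia
  | rewrite (_ : t = 2); last by rewrite /absdiff; lia
  | rewrite (_ : t = 4); last by rewrite /absdiff; lia ].
Ltac eval_lengths := repeat match goal with
  | |- context [minn ?x ?y] => rewrite_small (minn x y)
  | |- context [absdiff ?x ?y] => rewrite_small (absdiff x y) end.
Ltac perm_eq_124 := let P := fresh "P" in
  apply/permP => P; do 4 rewrite /= ?count_cat ?count_nseq;
  case: (P 1); case: (P 2); case: (P 4); lia.
Ltac perm_blocks := let P := fresh "P" in
  apply: perm_trans; last exact: perm_iota4;
  rewrite ![nat_of_bool _]/= ?addn0 ?addn1;
  apply/permP => P; rewrite !count_cat ?count_rev; lia.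
Ltac check_realization :=
  split; [perm_blocks | expand_gaps; expand_ends; eval_lengths; perm_eq_124].

Lemma linear_realization_122 N : 4 <= N ->
  exists p, [/\ head 0 p = N.-1, last 0 p = N.-2 &
                linear_realization N p (1 :: 2 :: 2 :: nseq (N - 4) 4)].
Proof.
move=> /(@decomp4 N 1) [k [J [lt_J4 ->]]]; rewrite addn1.
case: J lt_J4 => [|[|[|[|J]]]] // _; [
  exists (rev (iota4 3 k.+1) ++ iota4 1 k.+1 ++ rev (iota4 0 k.+1) ++ iota4 2 k.+1)
| exists (rev (iota4 0 k.+2) ++ iota4 2 k.+1 ++ rev (iota4 1 k.+1) ++ iota4 3 k.+1)
| exists (rev (iota4 1 k.+2) ++ iota4 3 k.+1 ++ rev (iota4 2 k.+1) ++ iota4 0 k.+2)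
| exists (rev (iota4 2 k.+2) ++ iota4 0 k.+2 ++ rev (iota4 3 k.+1) ++ iota4 1 k.+2)];
  (split; [expand_ends; lia | expand_ends; lia | check_realization]).
Qed.

Lemma linear_realization_112 N : 4 <= N ->
  exists p, head 0 p = N.-1 /\ linear_realization N p (1 :: 1 :: 2 :: nseq (N - 4) 4).
Proof.
move=> /(@decomp4 N 1) [k [J [lt_J4 ->]]]; rewrite addn1.
case: J lt_J4 => [|[|[|[|J]]]] // _; [
  exists (rev (iota4 3 k.+1) ++ iota4 2 k.+1 ++ rev (iota4 0 k.+1) ++ iota4 1 k.+1)
| exists (rev (iota4 0 k.+2) ++ iota4 1 k.+1 ++ rev (iota4 3 k.+1) ++ iota4 2 k.+1)
| exists (rev (iota4 1 k.+2) ++ iota4 0 k.+2 ++ rev (iota4 2 k.+1) ++ iota4 3 k.+1)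
| exists (rev (iota4 2 k.+2) ++ iota4 3 k.+1 ++ rev (iota4 1 k.+2) ++ iota4 0 k.+2)];
  (split; [expand_ends; lia | check_realization]).
Qed.

Lemma linear_realization_L124 a b c : 0 < a -> 0 < b -> 3 <= a + b ->
  exists p, linear_realization (a + b + c + 1) p (L124 a b c).
Proof.
move=> a_gt0 b_gt0 ab_ge3; have c4_ge4 : 4 <= c + 4 by rewrite leq_addl.
have c4_gt1 : 1 < c + 4 by rewrite addn4.
have [b_ge2|b_lt2] := leqP 2 b.
  have [p0 [h0 l0 r0]] := linear_realization_122 c4_ge4.
  have [p1 [h1 _ r1]] := linear_realization_twos (b - 2) c4_gt1 h0 l0 r0.
  have [p2 _ r2] := linear_realization_ones (a - 1) (ltn_addl _ (ltnW c4_gt1)) h1 r1.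
  exists p2; move: r2; rewrite (_ : a - 1 + (b - 2 + (c + 4)) = a + b + c + 1); last lia.
  by apply: linear_realization_perm; perm_eq_124.
have [p0 [h0 r0]] := linear_realization_112 c4_ge4.
have [p1 _ r1] := linear_realization_ones (a - 2) (ltnW c4_gt1) h0 r0.
exists p1; move: r1; rewrite (_ : a - 2 + (c + 4) = a + b + c + 1); last lia.
by apply: linear_realization_perm; perm_eq_124.
Qed.

Lemma cyclic_realization v : 8 <= v -> ~~ (4 %| v) ->
  exists p, ham_path v p /\ perm_eq (path_lengths v p) (1 :: 2 :: nseq (v - 3) 4).
Proof.
move=> /(@decomp4 v 2) [k [J [lt_J4 ->]]]; rewrite addn2 => ndvd4.
case: J lt_J4 ndvd4 => [|[|[|[|J]]]] // _ ndvd4; [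
    by move: ndvd4; rewrite addn0 dvdn_mulr
     | exists (iota4 0 k.+3 ++ iota4 1 k.+2 ++ rev (iota4 2 k.+2) ++ rev (iota4 3 k.+2))
     | exists (iota4 0 k.+3 ++ rev (iota4 2 k.+2) ++ iota4 1 k.+3 ++ iota4 3 k.+2)
     | exists (rev (iota4 0 k.+3) ++ rev (iota4 1 k.+3) ++ iota4 2 k.+3 ++ iota4 3 k.+2)];
  (split; [rewrite /ham_path; perm_blocks | rewrite path_lengths_gaps]).
all: expand_gaps; expand_ends; do 4 rewrite /= ?map_cat ?map_nseq.
all: eval_lengths; perm_eq_124.
Qed.

Lemma path_lengths_short_gaps v p : all (fun d => d.*2 <= v) (gaps p) ->
  path_lengths v p = gaps p.
Proof.
rewrite path_lengths_gaps => /allP short; rewrite -[RHS]map_id.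
by apply/eq_in_map => d /short; lia.
Qed.

Theorem proposition5p1 (a b c : nat) :
  1 <= a -> 1 <= b -> 1 <= c ->
  let v := a + b + c + 1 in
  4 <= v./2 ->
  (exists p : seq nat, ham_path v p /\ perm_eq (path_lengths v p) (L124 a b c))
  <->
  (forall d : nat, d %| v -> count (fun x => d %| x) (L124 a b c) <= v - d).
Proof.
move=> a_gt0 b_gt0 _ v v_half_ge4; have v_ge8 : 8 <= v by move: v_half_ge4; lia.
split=> [[p [hp hL]] d dv | hcount].
  by rewrite -(permP hL); apply: count_dvd_path_lengths => //; lia.
have [ab_ge3|ab_lt3] := leqP 3 (a + b).
  have [p [hp hL]] := linear_realization_L124 c a_gt0 b_gt0 ab_ge3.
  exists p; rewrite path_lengths_short_gaps //.
  by rewrite (perm_all _ hL) /L124 !all_cat !all_nseq /=; lia.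
have [a1 b1] : a = 1 /\ b = 1 by lia.
have ndvd4 : ~~ (4 %| v).
  by apply/negP => /hcount; rewrite /L124 !count_cat !count_nseq /v a1 b1 /=; lia.
have [p [hp hL]] := cyclic_realization v_ge8 ndvd4.
exists p; split=> //; apply: perm_trans hL _.
by rewrite /v a1 b1; perm_eq_124.
Qed.
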